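(* Let $\{\lambda_i\}_{i\ge0}\subset\mathbb R$ and $w(x)=\sum_{i=0}^\infty\lambda_ix^i$ for $x\in\Delta_0=[-1,1]$. The series $w$ converges uniformly on $\Delta_0$ to a function $\widetilde\sigma(x)=\int_{\Delta_1}\frac{d\sigma(t)}{1-tx}$ for some measure $\sigma\in\mathcal M_0(\Delta_1)$ if and only if the restricted Hausdorff moment problem for the sequence $\{\lambda_i\}_{i\in\mathbb Z_+}$ has a solution.
   Context: $\Delta_0=[-1,1]$, $\Delta_1=[0,1]$, $\mathbb Z_+=\{0,1,2,\dots\}$. $\mathcal M(\Delta_1)$ is the set of finite Borel measures on $\Delta_1$ whose support has infinitely many points and which do not change sign. $\mathcal M_0(\Delta_1)$ is the set of $\sigma\in\mathcal M(\Delta_1)$ such that $\lim_{x\to1,\,x\in(0,1)}\left|\int_{\Delta_1}\frac{d\sigma(t)}{1-tx}\right|<+\infty$. The restricted Hausdorff moment problem for a real sequence $\{c_i\}$ asks for $\sigma\in\mathcal M_0(\Delta_1)$ with $c_i=\int t^i\,d\sigma(t)$ for all $i$. *)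

From HB Require Import structures.
From mathcomp Require Import all_boot all_order all_algebra.
From mathcomp Require Import all_classical all_reals all_analysis.
Set Implicit Arguments. Unset Strict Implicit. Unset Printing Implicit Defensive.
Import Order.TTheory GRing.Theory Num.Theory.
Import numFieldNormedType.Exports.
Local Open Scope classical_set_scope.
Local Open Scope ring_scope.

Section Defs.
Context {R : realType}.

Definition Delta0 : set R := `[-1, 1]%classic.
Definition Delta1 : set R := `[0, 1]%classic.

Definition msupport (mu : set R -> \bar R) : set R :=
  [set x | forall e : R, 0 < e -> (0 < mu (ball x e))%E].

(* A sign-constant finite Borel measure sigma on Delta_1 is represented as
   sigma = s * mu with s = 1 or s = -1 and mu a finite positive Borel measure
   on R concentrated on Delta_1. *)
Definition in_M (s : R) (mu : {finite_measure set R -> \bar R}) : Prop :=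
  (s = 1 \/ s = -1) /\ mu (~` Delta1) = 0%E /\ infinite_set (msupport mu).

Definition sint (s : R) (mu : {finite_measure set R -> \bar R}) (f : R -> R) : R :=
  s * Rintegral mu Delta1 f.

Definition sigma_tilde (s : R) (mu : {finite_measure set R -> \bar R}) (x : R) : R :=
  sint s mu (fun t => (1 - t * x)^-1).

Definition in_M0 (s : R) (mu : {finite_measure set R -> \bar R}) : Prop :=
  in_M s mu /\
  exists L : R, (fun x => `|sigma_tilde s mu x|) @ at_left 1 --> L.

Definition unif_conv_Delta0 (lam : nat -> R) (f : R -> R) : Prop :=
  forall e : R, 0 < e -> exists N : nat, forall n : nat, (N <= n)%N ->
    forall x : R, Delta0 x -> `|\sum_(i < n) lam i * x ^+ i - f x| < e.

Definition restricted_Hausdorff_solvable (c : nat -> R) : Prop :=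
  exists (s : R) (mu : {finite_measure set R -> \bar R}),
    in_M0 s mu /\ forall i : nat, c i = sint s mu (fun t => t ^+ i).

End Defs.

From HB Require Import structures.
From mathcomp Require Import all_boot all_order all_algebra.
From mathcomp Require Import all_classical all_reals all_analysis.
From mathcomp Require Import measurable_realfun.
From mathcomp Require Import ring lra.
Import Order.TTheory GRing.Theory Num.Theory.
Import numFieldNormedType.Exports.
Set Implicit Arguments. Unset Strict Implicit. Unset Printing Implicit Defensive.
Local Open Scope classical_set_scope.
Local Open Scope ring_scope.

(* If sigma = s mu lies in M_0(Delta_1), then sigma~ is bounded near 1-.
   Since |sigma~(x)| >= mu{1} / (1 - x), mu has no atom at 1; since
   x^n \int_[0,1) sum_(i<n) t^i dmu <= |sigma~(x)| for 0 < x < 1, the integrals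
   of the geometric partial sums are bounded, so by monotone convergence
   1/(1 - t) is mu-integrable on [0,1).  Expanding 1/(1 - t x) geometrically gives,
   for |x| <= 1,
     |sum_(i<n) c_i x^i - sigma~(x)| <= \int_[0,1) (1/(1 - t) - sum_(i<n) t^i) dmu,
   which tends to 0: the moment series converges uniformly to sigma~ on Delta_0.
   Conversely, power series converging uniformly to the same function on Delta_0
   have equal coefficients: if sum d_i x^i -> 0 uniformly, then d is bounded,
   |d_0| <= 2 (sup |d_i|) x for small x > 0, and shifting gives d = 0. *)

Section geometric_sums.
Variable R : realFieldType.
Implicit Types y : R.

Lemma geometric_sum_subV y n : y != 1 ->
  \sum_(i < n) y ^+ i - (1 - y)^-1 = - (y ^+ n / (1 - y)).
Proof.
move=> y1; have y1l : y - 1 != 0 by rewrite subr_eq0.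
have y1r : 1 - y != 0 by rewrite subr_eq0 eq_sym.
have -> : \sum_(i < n) y ^+ i = (y ^+ n - 1) / (y - 1) by rewrite subrX1 [_ * \sum_(i < n) _]mulrC mulfK.
by field; rewrite y1l y1r.
Qed.

Lemma geometric_sum_leV y n : 0 <= y < 1 -> \sum_(i < n) y ^+ i <= (1 - y)^-1.
Proof.
move=> /andP[y0 y1]; rewrite -[(1 - y)^-1]div1r ler_pdivlMr ?subr_gt0 //.
have -> : (\sum_(i < n) y ^+ i) * (1 - y) = 1 - y ^+ n.
  by rewrite -opprB mulrN mulrC -subrX1 opprB.
by have := exprn_ge0 n y0; lra.
Qed.

End geometric_sums.

Section power_series_uniqueness.
Variable R : realFieldType.
Implicit Types (d : nat -> R) (x : R).

Definition psum d n x := \sum_(i < n) d i * x ^+ i.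

Definition psum_cvg0 d x := forall e, 0 < e ->
  exists N, forall n, (N <= n)%N -> `|psum d n x| < e.

Lemma psumS d n x : psum d n.+1 x = d 0%N + x * psum (d \o succn) n x.
Proof.
rewrite /psum big_ord_recl /= expr0 mulr1 mulr_sumr; congr (_ + _).
by apply: eq_bigr => i _; rewrite exprS mulrCA.
Qed.

Lemma psumSr d n x : psum d n.+1 x = psum d n x + d n * x ^+ n.
Proof. by rewrite /psum big_ord_recr. Qed.

Lemma norm_psum_le d M n x : 0 <= x <= 2^-1 -> (forall i, `|d i| <= M) ->
  `|psum d n x| <= M * 2.
Proof.
move=> /andP[x0 x2] dM; have M0 : 0 <= M := le_trans (normr_ge0 _) (dM 0%N).
apply: le_trans (ler_norm_sum _ _ _) _.
apply: (@le_trans _ _ (M * \sum_(i < n) x ^+ i)).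
  rewrite mulr_sumr; apply: ler_sum => i _.
  by rewrite normrM normrX (ger0_norm x0) ler_wpM2r ?exprn_ge0.
rewrite ler_wpM2l //; apply: le_trans (geometric_sum_leV n _) _.
  by apply/andP; split; lra.
by rewrite -[2 in leRHS]invrK lef_pV2 ?posrE; lra.
Qed.

Lemma psum_cvg0_coef0 d M : (forall i, `|d i| <= M) ->
  (forall x, 0 < x <= 2^-1 -> psum_cvg0 d x) -> d 0%N = 0.
Proof.
(* |d 0| <= |psum d N.+1 x| + x |psum (d \o succn) N x| < e + 2 M x;
   let e -> 0, then x -> 0+. *)
move=> dM d_cvg0; apply/normr0_eq0/eqP; rewrite eq_le normr_ge0 andbT.
have : M * 2 * x @[x --> 0^'+] --> M * 2 * 0.
  by apply: cvg_at_right_filter; apply: cvgM; [exact: cvg_cst | exact: cvg_id].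
rewrite mulr0 => /cvgr_to_ge; apply; near=> x.
have x_half : 0 < x <= 2^-1.
  apply/andP; split; near: x; [exact: nbhs_right_gt | exact: nbhs_right_ltW].
apply/ler_addgt0Pr => e e0.
have [N /(_ N.+1 (leqnSn N))] := d_cvg0 x x_half e e0.
have /andP[x0 x2] := x_half.
have := norm_psum_le N (_ : 0 <= x <= 2^-1) (fun i => dM i.+1).
rewrite (ltW x0) x2 psumS; set S := psum _ N x => /(_ isT) SM lt_e.
have := ler_normB (d 0%N + x * S) (x * S); rewrite addrK normrM gtr0_norm //.
have : x * `|S| <= x * (M * 2) by rewrite ler_wpM2l // ltW.
lra.
Unshelve. all: by end_near. Qed.

Lemma psum_cvg0_shift d x : 0 < x -> d 0%N = 0 ->
  psum_cvg0 d x -> psum_cvg0 (d \o succn) x.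
Proof.
move=> x0 d00 d_cvg0 e e0; have [N small_N] := d_cvg0 (e * x) (mulr_gt0 e0 x0).
exists N => n Nn; have := small_N n.+1 (leqW Nn).
by rewrite psumS d00 add0r normrM (gtr0_norm x0) [e * x]mulrC ltr_pM2l.
Qed.

Lemma psum_cvg0_coef_eq0 d M : (forall i, `|d i| <= M) ->
  (forall x, 0 < x <= 2^-1 -> psum_cvg0 d x) -> forall k, d k = 0.
Proof.
move=> + + k; elim: k d => [|k IH] d dM d_cvg0; first exact: psum_cvg0_coef0 dM d_cvg0.
have d00 := psum_cvg0_coef0 dM d_cvg0.
apply: (IH (d \o succn)) => [i|x x_half]; first exact: dM.
by apply: psum_cvg0_shift (d_cvg0 x x_half) => //; case/andP: x_half.
Qed.

Lemma uniform_psum_cvg0_coef_eq0 d :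
  (forall e, 0 < e -> exists N, forall n, (N <= n)%N ->
     forall x, -1 <= x <= 1 -> `|psum d n x| < e) ->
  forall k, d k = 0.
Proof.
move=> d_ucvg0.
have one_in : -1 <= (1 : R) <= 1 by apply/andP; split; lra.
(* d n = psum d n.+1 1 - psum d n 1 tends to 0, so d is bounded. *)
have d_cvg0 : d @ \oo --> 0.
  apply/cvgrPdist_lt => e e0; have [N small_N] := d_ucvg0 (e / 2) (divr_gt0 e0 (ltr0Sn _ 1)).
  near=> n; have Nn : (N <= n)%N by near: n; exists N.
  have := small_N n.+1 (leqW Nn) 1 one_in; have := small_N n Nn 1 one_in.
  rewrite psumSr expr1n mulr1 sub0r normrN => lt_Sn lt_n.
  have := ler_normB (psum d n 1 + d n) (psum d n 1); rewrite addrC addKr.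
  lra.
have [M _ dM] := pinfty_ex_gt0 (cvg_seq_bounded (cvgP _ d_cvg0)).
apply: (@psum_cvg0_coef_eq0 _ M) => [i|x /andP[x0 x2] e e0]; first exact: dM.
have [N small_N] := d_ucvg0 e e0; exists N => n Nn; apply: small_N => //.
by apply/andP; split; lra.
Unshelve. all: by end_near. Qed.

End power_series_uniqueness.

Lemma unif_conv_Delta0_coef_unique (R : realType) (a b : nat -> R) (f : R -> R) :
  unif_conv_Delta0 a f -> unif_conv_Delta0 b f -> a = b.
Proof.
move=> af bf; apply/funext => k; apply/eqP; rewrite -subr_eq0; apply/eqP; move: k.
apply: (uniform_psum_cvg0_coef_eq0 (d := fun i => a i - b i)) => e e0.
have e2 : 0 < e / 2 by rewrite divr_gt0.
have [Na near_a] := af _ e2; have [Nb near_b] := bf _ e2.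
exists (maxn Na Nb) => n Nn x x1.
have Dx : Delta0 x by rewrite /Delta0 /= in_itv.
have := near_a n (leq_trans (leq_maxl _ _) Nn) x Dx.
have := near_b n (leq_trans (leq_maxr _ _) Nn) x Dx.
have -> : psum (fun i => a i - b i) n x =
    (\sum_(i < n) a i * x ^+ i - f x) - (\sum_(i < n) b i * x ^+ i - f x).
  by rewrite opprB addrA subrK -sumrB; apply: eq_bigr => i _; rewrite mulrBl.
move=> lt_b lt_a; apply: le_lt_trans (ler_normB _ _) _.
by rewrite [X in _ < X]splitr ltrD.
Qed.

Section integrability.
Context d (T : measurableType d) (R : realType) (mu : {measure set T -> \bar R}).
Implicit Types (D : set T) (f g : T -> R).

Lemma integrable_of_norm_le D f g : measurable D -> measurable_fun D f ->
  (forall t, D t -> `|f t| <= g t) -> mu.-integrable D (EFin \o g) ->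
  mu.-integrable D (EFin \o f).
Proof.
move=> mD mf fg; apply: le_integrable => //; first exact/measurable_EFinP.
by move=> t Dt /=; rewrite lee_fin (le_trans (fg t Dt)) // ler_norm.
Qed.

Lemma Rintegral_sum D n (f : nat -> T -> R) : measurable D ->
  (forall i, mu.-integrable D (EFin \o f i)) ->
  \int[mu]_(t in D) \sum_(i < n) f i t = \sum_(i < n) \int[mu]_(t in D) f i t.
Proof.
move=> mD fi; elim: n => [|n IH].
  by under eq_Rintegral do rewrite big_ord0; rewrite Rintegral_cst // mul0r big_ord0.
under eq_Rintegral do rewrite big_ord_recr /=.
rewrite RintegralD // ?IH ?big_ord_recr //.
rewrite /comp; under eq_fun do rewrite -sumEFin.
by apply: integrable_sum => // i _; exact: fi.
Qed.

Lemma integrableB_EFin D f g : measurable D ->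
  mu.-integrable D (EFin \o f) -> mu.-integrable D (EFin \o g) ->
  mu.-integrable D (EFin \o (f \- g)).
Proof. by move=> mD fi gi; exact: (integrableB mD fi gi). Qed.

Lemma normr_Rintegral_le D f g : measurable D ->
  mu.-integrable D (EFin \o f) -> mu.-integrable D (EFin \o g) ->
  (forall t, D t -> `|f t| <= g t) ->
  `|\int[mu]_(t in D) f t| <= \int[mu]_(t in D) g t.
Proof.
move=> mD fi gi fg; apply: le_trans (le_normr_Rintegral mD fi) _.
apply: le_Rintegral => //; apply: integrable_of_norm_le gi => //.
  by apply: measurableT_comp => //; apply/measurable_EFinP; exact: measurable_int fi.
by move=> t Dt; rewrite normr_id fg.
Qed.

(* The integrability of each [f n] matters: [Rintegral] is [0] on functions
   with an infinite integral. *)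
Lemma cvg_Rintegral_nondecreasing (D : set T) (f : nat -> T -> R) (g : T -> R)
    (L : R) : measurable D ->
  (forall n, mu.-integrable D (EFin \o f n)) ->
  (forall n t, D t -> 0 <= f n t) -> (forall t, D t -> nondecreasing_seq (f ^~ t)) ->
  (forall t, D t -> f ^~ t @ \oo --> g t) ->
  (forall n, \int[mu]_(t in D) f n t <= L) ->
  mu.-integrable D (EFin \o g) /\
  \int[mu]_(t in D) f n t @[n --> \oo] --> \int[mu]_(t in D) g t.
Proof.
move=> mD fi f0 f_nd f_cvg fL.
have mf n : measurable_fun D (EFin \o f n) := measurable_int _ (fi n).
have f0E n t : D t -> (0 <= (EFin \o f n) t)%E by move=> Dt; rewrite lee_fin f0.
have f_ndE t : D t -> {homo (fun n => (EFin \o f n) t) : m n / (m <= n)%N >-> (m <= n)%E}.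
  by move=> Dt m n mn; rewrite lee_fin f_nd.
have mct : (\int[mu]_(t in D) f n t)%:E @[n --> \oo] --> (\int[mu]_(t in D) (EFin \o g) t)%E.
  have <- : (fun n => \int[mu]_(t in D) (EFin \o f n) t)%E =
            (fun n => (\int[mu]_(t in D) f n t)%:E).
    by apply/funext => n; rewrite fineK // (integrable_fin_num mD (fi n)).
  have -> : (\int[mu]_(t in D) (EFin \o g) t =
            \int[mu]_(t in D) limn (fun n => (EFin \o f n) t))%E.
    apply: eq_integral => t /set_mem Dt; apply/esym/cvg_lim => //.
    exact/cvg_EFin/f_cvg/Dt/nearW.
  exact: cvg_monotone_convergence.
have g_le : (\int[mu]_(t in D) (g t)%:E <= L%:E)%E.
  rewrite -(cvg_lim _ mct) //; apply: lime_le; first exact: cvgP mct.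
  by apply: nearW => n; rewrite lee_fin.
have gi : mu.-integrable D (EFin \o g).
  apply/integrableP; split.
    apply/measurable_EFinP; apply: (measurable_fun_cvg (h := f)) f_cvg.
    by move=> n; apply/measurable_EFinP; exact: mf.
  rewrite (eq_integral (EFin \o g)); first exact: le_lt_trans g_le (ltey _).
  move=> t /set_mem Dt; rewrite gee0_abs // lee_fin.
  by apply: (cvgr_to_ge (f_cvg t Dt)); apply: nearW => n; exact: f0.
split => //.
by rewrite -(fineK (integrable_fin_num mD gi)) in mct; exact: fine_cvg mct.
Qed.

End integrability.

Lemma integrable_of_norm_le_cst d (T : measurableType d) (R : realType)
    (mu : {finite_measure set T -> \bar R}) (D : set T) (f : T -> R) (M : R) :
  measurable D -> measurable_fun D f -> (forall t, D t -> `|f t| <= M) ->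
  mu.-integrable D (EFin \o f).
Proof.
move=> mD mf fM; apply: (integrable_of_norm_le mD mf fM).
exact: finite_measure_integrable_cst.
Qed.

Section cauchy_kernel.
Context {R : realType}.
Implicit Types x y t u : R.

Definition Delta1_co : set R := `[0, 1[.

(* At [x = t = 1] this is the junk value [0^-1 = 0]; integrals of
   [cauchy_kernel 1] are therefore taken over [Delta1_co]. *)
Definition cauchy_kernel x t : R := (1 - t * x)^-1.

Definition geom_psum n t : R := \sum_(i < n) t ^+ i.

Lemma Delta1P t : Delta1 t <-> 0 <= t <= 1.
Proof. by rewrite /Delta1 /= in_itv. Qed.

Lemma Delta1_coP t : Delta1_co t <-> 0 <= t < 1.
Proof. by rewrite /Delta1_co /= in_itv. Qed.

Lemma Delta1_setU1 : Delta1 = Delta1_co `|` [set 1].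
Proof.
apply/seteqP; split => t; rewrite /= Delta1P Delta1_coP.
  move=> /andP[t0]; rewrite le_eqVlt => /predU1P[->|t1]; first by right.
  by left; rewrite t0.
by case=> [/andP[-> /ltW]|->] //; rewrite ler01 lexx.
Qed.

Lemma Delta1_co1 : ~ Delta1_co 1.
Proof. by rewrite Delta1_coP ltxx andbF. Qed.

Lemma measurable_Delta1 : measurable (Delta1 : set R).
Proof. exact: measurable_itv. Qed.

Lemma measurable_Delta1_co : measurable Delta1_co.
Proof. exact: measurable_itv. Qed.

Lemma Delta1_co_norm_mul_le1 x t : -1 <= x <= 1 -> Delta1_co t -> `|t * x| <= 1.
Proof.
move=> /andP[xm1 x1] /Delta1_coP /andP[t0 t1]; rewrite normrM ger0_norm //.
have : `|x| <= 1 by rewrite ler_norml xm1.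
by have := normr_ge0 x; nra.
Qed.

Lemma cauchy_kernel_gt0 x t : t * x < 1 -> 0 < cauchy_kernel x t.
Proof. by move=> tx1; rewrite invr_gt0 subr_gt0. Qed.

Lemma cauchy_kernel_le x t y u : t * x <= u * y -> u * y < 1 ->
  cauchy_kernel x t <= cauchy_kernel y u.
Proof.
move=> le_tx uy1; rewrite lef_pV2 ?posrE ?subr_gt0 //; first lra.
exact: le_lt_trans uy1.
Qed.

Lemma measurable_cauchy_kernel x : -1 <= x <= 1 ->
  measurable_fun Delta1_co (cauchy_kernel x).
Proof.
move=> /andP[xm1 x1].
apply: (measurable_funS (E := `]-1, 1[%classic : set R)); first exact: measurable_itv.
  by move=> t /Delta1_coP /andP[t0 t1]; rewrite /= in_itv /=; apply/andP; split; lra.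
apply: open_continuous_measurable_fun; first exact: interval_open.
move=> t /set_mem; rewrite /= in_itv /= => /andP[tm1 t1].
apply: (@continuousV _ _ (fun t => 1 - t * x)).
  rewrite subr_eq0 eq_sym lt_eqF //.
  by have [t0|t0] := lerP 0 t; nra.
by apply: cvgB; [exact: cvg_cst | apply: cvgMl; exact: cvg_id].
Qed.

Lemma measurable_cauchy_kernel_Delta1 x : -1 <= x <= 1 ->
  measurable_fun Delta1 (cauchy_kernel x).
Proof.
move=> x1; rewrite Delta1_setU1.
apply/(measurable_funU _ measurable_Delta1_co (measurable_set1 1)).
by split; [exact: measurable_cauchy_kernel | exact: measurable_fun_set1].
Qed.

Lemma measurable_geom_psum n : measurable_fun setT (geom_psum n).
Proof. by apply: measurable_sum => i; exact: measurable_funX. Qed.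

Lemma geom_psum_ge0 n t : 0 <= t -> 0 <= geom_psum n t.
Proof. by move=> t0; apply: sumr_ge0 => i _; exact: exprn_ge0. Qed.

Lemma geom_psumSr n t : geom_psum n.+1 t = geom_psum n t + t ^+ n.
Proof. by rewrite /geom_psum big_ord_recr. Qed.

Lemma norm_geom_psum_le n y : `|y| <= 1 -> `|geom_psum n y| <= n%:R.
Proof.
move=> y1; apply: le_trans (ler_norm_sum _ _ _) _.
rewrite -[n in n%:R]card_ord -sumr_const.
by apply: ler_sum => i _; rewrite normrX exprn_ile1.
Qed.

Lemma cvg_geom_psum t : 0 <= t < 1 ->
  geom_psum n t @[n --> \oo] --> cauchy_kernel 1 t.
Proof.
move=> /andP[t0 t1]; rewrite /cauchy_kernel mulr1 -[X in _ --> X]mul1r.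
have -> : (fun n => geom_psum n t) = series (geometric 1 t).
  apply/funext => n; rewrite /series /= /geom_psum big_mkord.
  by apply: eq_bigr => i _; rewrite /geometric /= mul1r.
by apply: cvg_geometric_series; rewrite ger0_norm.
Qed.

Lemma geom_psum_sub_cauchy_kernel n x t : -1 <= x <= 1 -> 0 <= t < 1 ->
  `|geom_psum n (t * x) - cauchy_kernel x t| <= cauchy_kernel 1 t - geom_psum n t.
Proof.
move=> /andP[xm1 x1] /andP[t0 t1].
have tx1 : t * x < 1 by nra.
have -> : cauchy_kernel 1 t - geom_psum n t = t ^+ n * cauchy_kernel 1 t.
  by rewrite -opprB /cauchy_kernel mulr1 geometric_sum_subV ?lt_eqF // opprK.
rewrite /geom_psum geometric_sum_subV ?lt_eqF // normrN normrM.
apply: ler_pM => //; last first.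
  rewrite gtr0_norm ?cauchy_kernel_gt0 //.
  by apply: cauchy_kernel_le; rewrite mulr1 //; nra.
rewrite normrX normrM (ger0_norm t0) exprMn.
have : `|x| ^+ n <= 1 by apply: exprn_ile1 => //; rewrite ler_norml xm1.
by have := exprn_ge0 n t0; nra.
Qed.

Lemma exprn_geom_psum_le n x t : 0 <= x < 1 -> 0 <= t < 1 ->
  x ^+ n * geom_psum n t <= cauchy_kernel x t.
Proof.
move=> /andP[x0 x1] /andP[t0 t1].
apply: (@le_trans _ _ (geom_psum n (t * x))).
  rewrite /geom_psum mulr_sumr; apply: ler_sum => i _.
  rewrite exprMn mulrC ler_wpM2l ?exprn_ge0 //.
  by apply: ler_wiXn2l => //; [exact: ltW | exact: ltnW].
by apply: geometric_sum_leV; apply/andP; split; nra.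
Qed.

End cauchy_kernel.

Lemma Rintegral_setU1_null (R : realType) (mu : {measure set R -> \bar R})
    (D : set R) (a : R) (f : R -> R) :
  measurable D -> ~ D a -> mu [set a] = 0%E -> measurable_fun D f ->
  \int[mu]_(t in D `|` [set a]) f t = \int[mu]_(t in D) f t.
Proof.
move=> mD Da mu_a mf; rewrite /Rintegral integral_setU //; first last.
- by apply/disj_setPS => t [Dt /= ta]; rewrite -ta in Da.
- apply/(measurable_funU _ mD (measurable_set1 a)).
  by split; [exact/measurable_EFinP | exact: measurable_fun_set1].
rewrite [X in (_ + X)%E](eq_integral (cst (f a)%:E)); last by move=> t /set_mem ->.
by rewrite integral_cst ?mu_a ?mule0 ?adde0 //; exact: measurable_set1.
Qed.

Section markov_function.
Context (R : realType) (mu : {finite_measure set R -> \bar R}).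

Definition moment (s : R) i := sint s mu (fun t => t ^+ i).

Lemma integrable_geom_psum n (f : R -> R) : measurable_fun Delta1_co f ->
  (forall t, Delta1_co t -> `|f t| <= 1) ->
  mu.-integrable Delta1_co (EFin \o (geom_psum n \o f)).
Proof.
move=> mf f1; apply: (@integrable_of_norm_le_cst _ _ _ mu _ _ n%:R).
- exact: measurable_Delta1_co.
- exact: measurableT_comp (measurable_geom_psum n) mf.
- by move=> t Dt; apply: norm_geom_psum_le; exact: f1.
Qed.

Lemma integrable_geom_psum1 n : mu.-integrable Delta1_co (EFin \o geom_psum n).
Proof.
apply: (integrable_geom_psum n (f := id)) => // t /Delta1_coP /andP[t0 t1].
by rewrite ger0_norm // ltW.
Qed.

Lemma integrable_cauchy_kernel_Delta1 x : 0 <= x < 1 ->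
  mu.-integrable Delta1 (EFin \o cauchy_kernel x).
Proof.
move=> /andP[x0 x1].
apply: (@integrable_of_norm_le_cst _ _ _ mu _ _ (cauchy_kernel x 1)).
- exact: measurable_Delta1.
- by apply: measurable_cauchy_kernel_Delta1; apply/andP; split; lra.
move=> t /Delta1P /andP[t0 t1]; rewrite gtr0_norm; last by apply: cauchy_kernel_gt0; nra.
by apply: cauchy_kernel_le; rewrite ?mul1r //; nra.
Qed.

Lemma Rintegral_cauchy_kernel_Delta1 x : 0 <= x < 1 ->
  \int[mu]_(t in Delta1) cauchy_kernel x t =
  \int[mu]_(t in Delta1_co) cauchy_kernel x t + cauchy_kernel x 1 * fine (mu [set 1]).
Proof.
move=> x01; have := integrable_cauchy_kernel_Delta1 x01; rewrite Delta1_setU1 => xi.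
rewrite Rintegral_setU //; last 2 first.
- exact: measurable_Delta1_co.
- by apply/disj_setPS => t [Dt /= t1]; move: Dt; rewrite t1; exact: Delta1_co1.
congr (_ + _); rewrite -Rintegral_cst; last exact: measurable_set1.
by apply: eq_Rintegral => t /set_mem ->.
Qed.

Lemma Rintegral_Delta1 (f : R -> R) : mu [set 1] = 0%E ->
  measurable_fun Delta1_co f ->
  \int[mu]_(t in Delta1) f t = \int[mu]_(t in Delta1_co) f t.
Proof.
move=> mu1 mf; rewrite Delta1_setU1 Rintegral_setU1_null //.
- exact: measurable_Delta1_co.
- exact: Delta1_co1.
Qed.

Lemma exprn_Rintegral_geom_psum_le n x : 0 <= x < 1 ->
  x ^+ n * \int[mu]_(t in Delta1_co) geom_psum n t <=
  \int[mu]_(t in Delta1_co) cauchy_kernel x t.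
Proof.
move=> x01; have /andP[x0 x1] := x01; have mD := @measurable_Delta1_co R.
rewrite -RintegralZl //; last exact: integrable_geom_psum1.
apply: le_Rintegral => //.
- apply: (@integrable_of_norm_le_cst _ _ _ mu _ _ (x ^+ n * n%:R)) => //.
    by apply: measurable_funM => //; exact: measurableT_comp (measurable_geom_psum n) _.
  move=> t /Delta1_coP /andP[t0 t1]; rewrite normrM normrX ger0_norm //.
  by rewrite ler_wpM2l ?exprn_ge0 // norm_geom_psum_le // ger0_norm // ltW.
- apply: integrableS (integrable_cauchy_kernel_Delta1 x01) => //.
    exact: measurable_Delta1.
  by move=> t /Delta1_coP /andP[t0 t1]; apply/Delta1P; rewrite t0 ltW.
- by move=> t /Delta1_coP t01; exact: exprn_geom_psum_le.
Qed.

Variable s : R.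
Hypothesis sigma_M0 : in_M0 s mu.

Lemma normr_sign : `|s| = 1.
Proof. by case: sigma_M0.1.1 => ->; rewrite ?normrN normr1. Qed.

Lemma norm_sigma_tilde x : 0 <= x < 1 ->
  `|sigma_tilde s mu x| = \int[mu]_(t in Delta1) cauchy_kernel x t.
Proof.
move=> /andP[x0 x1].
rewrite /sigma_tilde /sint normrM normr_sign mul1r ger0_norm //.
apply: Rintegral_ge0 => t /Delta1P /andP[t0 t1]; apply/ltW/cauchy_kernel_gt0; nra.
Qed.

Lemma Rintegral_cauchy_kernel_bounded_near1 : exists L : R,
  \forall x \near 1^'-, 0 < x < 1 /\ \int[mu]_(t in Delta1) cauchy_kernel x t <= L.
Proof.
have [_ [l /cvg_bounded/ex_bound [L near_L]]] := sigma_M0.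
exists L; near=> x.
have x01 : 0 < x < 1.
  by apply/andP; split; near: x; [exact: nbhs_left_gt | exact: nbhs_left_lt].
split => //; rewrite -norm_sigma_tilde; last by case/andP: x01 => /ltW -> ->.
by rewrite -normr_id; near: x; exact: near_L.
Unshelve. all: by end_near. Qed.

Lemma atom1_eq0 : mu [set 1] = 0%E.
Proof.
have [L near_L] := Rintegral_cauchy_kernel_bounded_near1.
have mu1_fin : mu [set 1] \is a fin_num by apply: fin_num_measure; exact: measurable_set1.
rewrite -(fineK mu1_fin); congr (_%:E); apply/eqP.
rewrite eq_le fine_ge0 ?measure_ge0 // andbT.
(* fine mu{1} <= (1 - x) L for x near 1- *)
have : (1 - x) * L @[x --> 1^'-] --> (1 - 1) * L.
  apply: cvg_at_left_filter; apply: cvgMl; apply: cvgB; [exact: cvg_cst | exact: cvg_id].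
rewrite subrr mul0r => /cvgr_to_ge; apply; near=> x.
have [/andP[x0 x1]] : 0 < x < 1 /\ \int[mu]_(t in Delta1) cauchy_kernel x t <= L.
  by near: x; exact: near_L.
rewrite Rintegral_cauchy_kernel_Delta1 ?(ltW x0) ?x1 //.
have : 0 <= \int[mu]_(t in Delta1_co) cauchy_kernel x t.
  apply: Rintegral_ge0 => t /Delta1_coP /andP[t0 t1].
  by apply/ltW/cauchy_kernel_gt0; nra.
rewrite /cauchy_kernel mul1r.
set m := fine _; set I := \int[mu]_(t in _) _ => I0 le_L.
have x1' : 0 < 1 - x by lra.
have : (1 - x)^-1 * m <= L by lra.
by rewrite -ler_pdivlMl ?invr_gt0 // invrK.
Unshelve. all: by end_near. Qed.

Lemma Rintegral_geom_psum_le : exists L : R, forall n,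
  \int[mu]_(t in Delta1_co) geom_psum n t <= L.
Proof.
have [L near_L] := Rintegral_cauchy_kernel_bounded_near1.
exists L => n; set P := \int[mu]_(t in Delta1_co) geom_psum n t.
have : x ^+ n * P @[x --> 1^'-] --> 1 ^+ n * P.
  by apply: cvg_at_left_filter; apply: cvgMl; exact: exprn_continuous.
rewrite expr1n mul1r => /cvgr_to_le; apply; near=> x.
have [/andP[x0 x1]] : 0 < x < 1 /\ \int[mu]_(t in Delta1) cauchy_kernel x t <= L.
  by near: x; exact: near_L.
have x01 : 0 <= x < 1 by rewrite (ltW x0) x1.
rewrite Rintegral_cauchy_kernel_Delta1 //.
have : 0 <= cauchy_kernel x 1 * fine (mu [set 1]).
  by rewrite mulr_ge0 ?fine_ge0 ?measure_ge0 // ltW // cauchy_kernel_gt0 // mul1r.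
have := exprn_Rintegral_geom_psum_le n x01; rewrite -/P.
lra.
Unshelve. all: by end_near. Qed.

Lemma cvg_Rintegral_geom_psum :
  mu.-integrable Delta1_co (EFin \o cauchy_kernel 1) /\
  \int[mu]_(t in Delta1_co) geom_psum n t @[n --> \oo] -->
  \int[mu]_(t in Delta1_co) cauchy_kernel 1 t.
Proof.
have [L geom_L] := Rintegral_geom_psum_le.
apply: (cvg_Rintegral_nondecreasing measurable_Delta1_co _ _ _ _ geom_L).
- exact: integrable_geom_psum1.
- by move=> n t /Delta1_coP /andP[t0 _]; exact: geom_psum_ge0.
- move=> t /Delta1_coP /andP[t0 _]; apply/nondecreasing_seqP => n.
  by rewrite geom_psumSr lerDl exprn_ge0.
- by move=> t /Delta1_coP; exact: cvg_geom_psum.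
Qed.

Lemma psum_moment n x : -1 <= x <= 1 ->
  psum (moment s) n x = s * \int[mu]_(t in Delta1_co) geom_psum n (t * x).
Proof.
move=> x1.
have pow_int i : mu.-integrable Delta1_co (EFin \o (fun t => (t * x) ^+ i)).
  apply: (@integrable_of_norm_le_cst _ _ _ mu _ _ 1).
  - exact: measurable_Delta1_co.
  - by apply: measurable_funX; exact: measurable_funM.
  - by move=> t Dt; rewrite normrX exprn_ile1 // Delta1_co_norm_mul_le1.
rewrite /geom_psum (@Rintegral_sum _ _ _ mu _ n (fun i t => (t * x) ^+ i)) //; last first.
  exact: measurable_Delta1_co.
rewrite /psum mulr_sumr; apply: eq_bigr => i _.
rewrite /moment /sint -mulrA Rintegral_Delta1 ?atom1_eq0 //.
rewrite -RintegralZr; first by congr (s * _); apply: eq_Rintegral => t _; rewrite exprMn.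
  exact: measurable_Delta1_co.
apply: (@integrable_of_norm_le_cst _ _ _ mu _ _ 1).
- exact: measurable_Delta1_co.
- exact: measurable_funX.
- by move=> t /Delta1_coP /andP[t0 t1]; rewrite normrX exprn_ile1 // ger0_norm // ltW.
Qed.

Lemma sigma_tilde_Delta1_co x : -1 <= x <= 1 ->
  sigma_tilde s mu x = s * \int[mu]_(t in Delta1_co) cauchy_kernel x t.
Proof.
move=> x1; rewrite /sigma_tilde /sint (Rintegral_Delta1 (f := cauchy_kernel x)) //.
- exact: atom1_eq0.
- exact: measurable_cauchy_kernel.
Qed.

Lemma norm_psum_moment_sub_le n x : -1 <= x <= 1 ->
  `|psum (moment s) n x - sigma_tilde s mu x| <=
  \int[mu]_(t in Delta1_co) cauchy_kernel 1 t - \int[mu]_(t in Delta1_co) geom_psum n t.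
Proof.
move=> x1; have [k1_int _] := cvg_Rintegral_geom_psum.
have mD := @measurable_Delta1_co R.
have geom_int : mu.-integrable Delta1_co (EFin \o (fun t => geom_psum n (t * x))).
  apply: (integrable_geom_psum n (f := fun t => t * x)); first exact: measurable_funM.
  by move=> t Dt; exact: Delta1_co_norm_mul_le1.
have k_int : mu.-integrable Delta1_co (EFin \o cauchy_kernel x).
  apply: integrable_of_norm_le k1_int => //; first exact: measurable_cauchy_kernel.
  move=> t /Delta1_coP /andP[t0 t1]; move: x1 => /andP[xm1 x1].
  rewrite gtr0_norm; last by apply: cauchy_kernel_gt0; nra.
  by apply: cauchy_kernel_le; rewrite ?mulr1 //; nra.
rewrite psum_moment // sigma_tilde_Delta1_co // -mulrBr normrM normr_sign mul1r.
rewrite -!RintegralB //; last exact: integrable_geom_psum1.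
apply: normr_Rintegral_le => //.
- exact: integrableB_EFin.
- exact: integrableB_EFin (integrable_geom_psum1 n).
- by move=> t /Delta1_coP; exact: geom_psum_sub_cauchy_kernel.
Qed.

Lemma unif_conv_moment : unif_conv_Delta0 (moment s) (sigma_tilde s mu).
Proof.
move=> e e0; have [_ cvg_geom] := cvg_Rintegral_geom_psum.
have [N _ near_e] := cvgr_dist_lt _ _ cvg_geom _ e0.
exists N => n Nn x; rewrite /Delta0 /= in_itv /= => x1.
apply: le_lt_trans (norm_psum_moment_sub_le n x1) _.
exact: le_lt_trans (ler_norm _) (near_e n Nn).
Qed.

End markov_function.

Theorem lemma2p2 (R : realType) (lam : nat -> R) :
  (exists (s : R) (mu : {finite_measure set R -> \bar R}),
      in_M0 s mu /\ unif_conv_Delta0 lam (sigma_tilde s mu))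
  <-> restricted_Hausdorff_solvable lam.
Proof.
split=> [[s [mu [sigma_M0 lam_cvg]]] | [s [mu [sigma_M0 lam_moment]]]];
  exists s, mu; split => //.
  by move=> i; rewrite (unif_conv_Delta0_coef_unique lam_cvg (unif_conv_moment sigma_M0)).
by rewrite (_ : lam = moment mu s); [exact: unif_conv_moment | exact/funext].
Qed.
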